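(* Let $k\ge2$, let $\Pi\subseteq\mathfrak S_k$ be a nonoverlapping set of patterns, and let $I$ be a finite set of positive integers with $m=\max(I\cup\{0\})$. Then there is a function $g$ in the $\mathbb Q$-vector space $V_\Pi$ spanned by the functions $n\mapsto n^{j}\,\mathrm{av}_\Pi(n+l)$ ($j\in\mathbb Z_{\ge0}$, $l\in\mathbb Z$) such that $\#\Pi(I;n)=g(n)$ for all integers $n\ge m+k-1$.
   Context: Two integer sequences $a_1\cdots a_k$ and $b_1\cdots b_k$ are order isomorphic if $a_i<a_j\iff b_i<b_j$ for all $i,j$. For $\sigma\in\mathfrak S_k$, a permutation $\pi\in\mathfrak S_n$ contains a consecutive copy of $\sigma$ at index $i$ if $\pi_i\pi_{i+1}\cdots\pi_{i+k-1}$ is order isomorphic to $\sigma$. For a set $\Pi$ of patterns, $\Pi(I;n)$ is the set of $\pi\in\mathfrak S_n$ such that the set of indices $i$ at which $\pi$ contains a consecutive copy of some $\sigma\in\Pi$ is exactly $I$, and $\mathrm{av}_\Pi(n)=\#\Pi(\emptyset;n)$ (with $\mathrm{av}_\Pi(n)$ understood as $\#\Pi(\emptyset;n)$ for all integers $n\ge0$). $\Pi\subseteq\mathfrak S_k$ is nonoverlapping if for all (not necessarily distinct) $\sigma,\tau\in\Pi$ and every $l$ with $1<l<k$, the length-$l$ prefix of $\sigma$ is not order isomorphic to the length-$l$ suffix of $\tau$. *)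

From HB Require Import structures.
From mathcomp Require Import all_boot all_order all_algebra all_fingroup.
Set Implicit Arguments. Unset Strict Implicit. Unset Printing Implicit Defensive.
Import Order.TTheory GRing.Theory Num.Theory.

(* One-line notation of a permutation of 'I_n (values in 0..n-1). *)
Definition word n (p : {perm 'I_n}) : seq nat := [seq val (p i) | i <- enum 'I_n].

Definition order_iso (a b : seq nat) : bool :=
  (size a == size b) &&
  [forall i : 'I_(size a), forall j : 'I_(size a),
     (nth 0 a i < nth 0 a j) == (nth 0 b i < nth 0 b j)].

(* pi contains a consecutive copy of sigma at (1-based) index i. *)
Definition occurs_at n k (pi : {perm 'I_n}) (sigma : {perm 'I_k}) (i : nat) : bool :=
  [&& 0 < i, i + k - 1 <= n & order_iso (take k (drop i.-1 (word pi))) (word sigma)].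

Definition occ_indices n k (Pi : {set {perm 'I_k}}) (pi : {perm 'I_n}) : seq nat :=
  [seq i <- iota 1 n | [exists s in Pi, occurs_at pi s i]].

Definition PiI k (Pi : {set {perm 'I_k}}) (I : seq nat) (n : nat) : nat :=
  #|[set pi : {perm 'I_n} |
      all (fun i => i \in I) (occ_indices Pi pi) &&
      all (fun i => i \in occ_indices Pi pi) I]|.

Definition av k (Pi : {set {perm 'I_k}}) (n : nat) : nat := PiI Pi [::] n.

Definition avZ k (Pi : {set {perm 'I_k}}) (z : int) : rat :=
  match z with Posz n => (av Pi n)%:R | Negz _ => 0%R end.

Definition nonoverlapping k (Pi : {set {perm 'I_k}}) : Prop :=
  forall s t, s \in Pi -> t \in Pi -> forall l, 1 < l < k ->
    ~~ order_iso (take l (word s)) (drop (k - l) (word t)).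

Definition in_V k (Pi : {set {perm 'I_k}}) (g : int -> rat) : Prop :=
  exists s : seq (rat * nat * int),
    forall z : int,
      g z = (\sum_(t <- s) t.1.1 * (z%:~R) ^+ t.1.2 * avZ Pi (z + t.2))%R.

From mathcomp Require Import all_boot all_order all_algebra all_fingroup.
From mathcomp Require Import zify ring.
Set Implicit Arguments. Unset Strict Implicit. Unset Printing Implicit Defensive.

(* Cut a permutation of length [n] after position [m = max I] and let [J0 = I \ {m}].
   If some [i] in [J0] lies within distance [k - 2] of [m], then [#Pi(I; n) = 0], since two
   occurrences that close would overlap in at least two entries.  Otherwise, count the
   permutations whose first [m] entries have exactly the occurrences [J0] and whose last
   [n - m] entries avoid [Pi]: there are [C(n, m) #Pi(J0; m) av(n - m)] of them, and since
   [Pi] is nonoverlapping each has at most one occurrence [j] crossing the cut, so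
     [C(n, m) #Pi(J0; m) av(n - m) = #Pi(J0; n) + sum_j #Pi(J0 + j; n)].
   The left side is a polynomial in [n] times [av(n - m)], the term [j = m] is [#Pi(I; n)],
   and every other term has a smaller maximum, so induction on [m] concludes. *)

Lemma order_isoP a b : reflect (size a = size b /\
  forall i j, i < size a -> j < size a -> (nth 0 a i < nth 0 a j) = (nth 0 b i < nth 0 b j))
  (order_iso a b).
Proof.
apply: (iffP andP) => [[/eqP hs /forallP H]|[hs H]]; split => //.
- by move=> i j hi hj; have /forallP/(_ (Ordinal hj))/eqP := H (Ordinal hi).
- by apply/eqP.
- by apply/forallP => i; apply/forallP => j; apply/eqP; apply: H.
Qed.

Lemma order_iso_sym a b : order_iso a b -> order_iso b a.
Proof.
move/order_isoP => [hs H]; apply/order_isoP; split=> // i j hi hj.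
by rewrite H // hs.
Qed.

Lemma order_iso_trans a b c : order_iso a b -> order_iso b c -> order_iso a c.
Proof.
move/order_isoP => [hs H] /order_isoP [hs' H']; apply/order_isoP.
by split=> [|i j hi hj]; rewrite ?hs // H // H' // -hs.
Qed.

Lemma order_iso_transl a b c : order_iso a b -> order_iso a c = order_iso b c.
Proof.
move=> hab; apply/idP/idP; first exact: order_iso_trans (order_iso_sym hab).
exact: order_iso_trans hab.
Qed.

Lemma order_iso_take l a b : order_iso a b -> order_iso (take l a) (take l b).
Proof.
move/order_isoP => [hs H]; apply/order_isoP; split; first by rewrite !size_take hs.
move=> i j; rewrite size_take !leq_min => /andP [hil hia] /andP [hjl hja].
by rewrite !nth_take // H.
Qed.

Lemma order_iso_drop d a b : order_iso a b -> order_iso (drop d a) (drop d b).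
Proof.
move/order_isoP => [hs H]; apply/order_isoP; split; first by rewrite !size_drop hs.
move=> i j; rewrite size_drop => hi hj.
by rewrite !nth_drop H // -ltn_subRL.
Qed.

Lemma size_word n (p : {perm 'I_n}) : size (word p) = n.
Proof. by rewrite /word size_map size_enum_ord. Qed.

Section Occurrences.
Variables (k : nat) (Pi : {set {perm 'I_k}}).

Definition occ_seq (w : seq nat) (i : nat) : bool :=
  [&& 0 < i, i + k - 1 <= size w &
      [exists s in Pi, order_iso (take k (drop i.-1 w)) (word s)]].

Definition occ_set (w : seq nat) : seq nat := [seq i <- iota 1 (size w) | occ_seq w i].

Definition exact_occ (J : seq nat) (w : seq nat) : bool :=
  all (fun i => i \in J) (occ_set w) && all (fun i => i \in occ_set w) J.

Lemma occ_indices_word n (p : {perm 'I_n}) : occ_indices Pi p = occ_set (word p).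
Proof.
rewrite /occ_indices /occ_set size_word; apply: eq_filter => i.
rewrite /occ_seq /occurs_at size_word.
by case: (0 < i); case: (i + k - 1 <= n) => //=; apply/existsP => -[s]; rewrite andbF.
Qed.

Lemma PiI_word J n : PiI Pi J n = #|[set p : {perm 'I_n} | exact_occ J (word p)]|.
Proof. by apply: eq_card => p; rewrite !inE occ_indices_word. Qed.

Lemma occ_seq_iso u u' i : order_iso u u' -> occ_seq u i = occ_seq u' i.
Proof.
move=> h; rewrite /occ_seq; have /order_isoP [-> _] := h.
congr [&& _, _ & _]; apply: eq_existsb => s; congr (_ && _).
exact/order_iso_transl/order_iso_take/order_iso_drop.
Qed.

Lemma exact_occ_iso J u u' : order_iso u u' -> exact_occ J u = exact_occ J u'.
Proof.
move=> h; have /order_isoP [hs _] := h.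
suff e : occ_set u = occ_set u' by rewrite /exact_occ e.
by rewrite /occ_set hs; apply: eq_filter => i; apply: occ_seq_iso.
Qed.

Lemma occ_seq_bounds w i : occ_seq w i -> 0 < i /\ i + k - 1 <= size w.
Proof. by case/and3P. Qed.

Hypothesis k_gt0 : 0 < k.

Lemma mem_occ_set w i : (i \in occ_set w) = occ_seq w i.
Proof.
rewrite mem_filter mem_iota; case h: (occ_seq w i) => //=.
by case/occ_seq_bounds: h => h1 h2; apply/andP; split; lia.
Qed.

Lemma exact_occP J w : reflect (forall i, occ_seq w i = (i \in J)) (exact_occ J w).
Proof.
apply: (iffP andP) => [[/allP h1 /allP h2] i|h].
  apply/idP/idP => hi; first by apply: h1; rewrite mem_occ_set.
  by rewrite -mem_occ_set; apply: h2.
by split; apply/allP => i; rewrite mem_occ_set h.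
Qed.

Lemma eq_PiI J J' n : J =i J' -> PiI Pi J n = PiI Pi J' n.
Proof.
move=> eJ; rewrite !PiI_word; apply: eq_card => p; rewrite !inE.
by apply/exact_occP/exact_occP => h i; rewrite h eJ.
Qed.

Lemma occ_seq_take m w i : i + k <= m.+1 -> m <= size w ->
  occ_seq (take m w) i = occ_seq w i.
Proof.
case: i => [|i] // hi hm; rewrite /occ_seq /= size_take_min (minn_idPl hm).
have -> : i.+1 + k - 1 <= m by lia.
have -> : i.+1 + k - 1 <= size w by lia.
by rewrite /= take_drop [in RHS]take_drop take_takel //; lia.
Qed.

Lemma occ_seq_take_out m w i : m.+1 < i + k -> occ_seq (take m w) i = false.
Proof. by move=> h; apply/negbTE/negP => /occ_seq_bounds [_]; rewrite size_take_min; lia. Qed.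

Lemma occ_seq_drop m w i : 0 < i -> occ_seq (drop m w) i = occ_seq w (m + i).
Proof.
case: i => // i _; rewrite /occ_seq /= size_drop drop_drop addnS /= (addnC i m).
by congr (_ && _); apply/idP/idP; lia.
Qed.

Lemma exact_occ_take_drop m J0 w : m <= size w -> (forall i, i \in J0 -> i + k <= m.+1) ->
  reflect ((forall i, i + k <= m.+1 -> occ_seq w i = (i \in J0)) /\
           (forall i, m < i -> ~~ occ_seq w i))
          (exact_occ J0 (take m w) && exact_occ [::] (drop m w)).
Proof.
move=> hm hJ0; apply: (iffP andP) => [[/exact_occP hP /exact_occP hR]|[h1 h2]].
  split=> [i hi|i hi]; first by rewrite -(occ_seq_take hi hm) hP.
  by rewrite -(subnKC (ltnW hi)) -occ_seq_drop ?subn_gt0 // hR.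
split; apply/exact_occP => i.
  case: (leqP (i + k) m.+1) => h; first by rewrite occ_seq_take // h1.
  by rewrite occ_seq_take_out //; apply/esym/negP => /hJ0; lia.
by case: i => [|i] //; rewrite occ_seq_drop // (negbTE (h2 _ _)) //; lia.
Qed.

End Occurrences.

Lemma nonoverlapping_occ_gap k (Pi : {set {perm 'I_k}}) w i j :
  nonoverlapping Pi -> occ_seq Pi w i -> occ_seq Pi w j -> i < j -> i + k <= j.+1.
Proof.
move=> nonov /and3P [hi0 _ /existsP [s /andP [hs iso_s]]].
move=> /and3P [hj0 _ /existsP [t /andP [ht iso_t]]] hij; rewrite leqNgt; apply/negP => hjk.
set l := i + k - j.
have hl : 1 < l < k by apply/andP; split; lia.
have /negP := nonov t s ht hs l hl; apply.
have e1 : take l (take k (drop j.-1 w)) = take l (drop j.-1 w) by rewrite take_takel //; lia.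
have e2 : drop (k - l) (take k (drop i.-1 w)) = take l (drop j.-1 w).
  have -> : take k (drop i.-1 w) = take (l + (k - l)) (drop i.-1 w) by congr take; lia.
  rewrite -take_drop drop_drop; congr (take _ (drop _ _)); lia.
apply: order_iso_trans (order_iso_take l (order_iso_sym iso_t)) _.
by rewrite e1 -e2; apply: order_iso_drop.
Qed.

Definition order_invariant (Q : pred (seq nat)) : Prop :=
  forall u v, order_iso u v -> Q u = Q v.

Lemma card_set_sum (T : finType) (B : pred T) : #|[set x | B x]| = \sum_x (B x : nat).
Proof. by rewrite -sum1_card big_mkcond /=; apply: eq_bigr => x _; rewrite inE. Qed.

Lemma nth_map_enum_ord a (g : 'I_a -> nat) x (hx : x < a) :
  nth 0 [seq g i | i <- enum 'I_a] x = g (Ordinal hx).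
Proof.
rewrite (nth_map (Ordinal hx)) ?size_enum_ord //; congr g; apply: val_inj => /=.
by rewrite nth_enum_ord.
Qed.

Lemma order_iso_map a (g h : 'I_a -> nat) :
  (forall i j, (g i < g j) = (h i < h j)) ->
  order_iso [seq g i | i <- enum 'I_a] [seq h i | i <- enum 'I_a].
Proof.
move=> H; apply/order_isoP; split; first by rewrite !size_map.
move=> x y; rewrite size_map size_enum_ord => hx hy.
by rewrite !(nth_map_enum_ord _ hx) !(nth_map_enum_ord _ hy).
Qed.

Lemma standardization a (f : 'I_a -> nat) : injective f ->
  exists p : {perm 'I_a}, forall i j, (f i < f j) = (p i < p j).
Proof.
move=> finj.
have rank_lt i : #|[set j | f j < f i]| < a.
  suff h : #|[set j | f j < f i]| < #|[set: 'I_a]| by rewrite cardsT card_ord in h.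
  apply: proper_card; apply/properP.
  by split; [exact: subsetT | exists i; rewrite ?inE // ltnn].
pose rk i : 'I_a := Ordinal (rank_lt i).
have rk_mono i j : (f i < f j) = (rk i < rk j).
  apply/idP/idP => h.
    apply: proper_card; apply/properP; split.
      by apply/subsetP => x; rewrite !inE => hx; apply: ltn_trans hx h.
    by exists i; rewrite !inE ?ltnn.
  apply: contraTT h; rewrite -!leqNgt => h; apply: subset_leq_card.
  by apply/subsetP => x; rewrite !inE => hx; apply: leq_trans hx h.
have rk_inj : injective rk.
  move=> i j e; apply: finj.
  by case: (ltngtP (f i) (f j)) => //; rewrite rk_mono e ltnn.
by exists (perm rk_inj) => i j; rewrite !permE.
Qed.

Lemma card_perm_relabel a (f : 'I_a -> nat) (Q : pred (seq nat)) :
  injective f -> order_invariant Q ->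
  #|[set r : {perm 'I_a} | Q [seq f (r i) | i <- enum 'I_a]]| =
  #|[set p : {perm 'I_a} | Q (word p)]|.
Proof.
move=> finj hQ; have [p0 hp0] := standardization finj.
rewrite -(card_preimset [set p | Q (word p)] (mulIg p0)); apply: eq_card => r; rewrite !inE.
by apply: hQ; apply: order_iso_map => i j; rewrite !permM hp0.
Qed.

Lemma enum_ord_add a b :
  enum 'I_(a + b) = [seq lshift b i | i <- enum 'I_a] ++ [seq rshift a j | j <- enum 'I_b].
Proof.
have val_lshift (s : seq 'I_a) : map val (map (lshift b) s) = map val s.
  by rewrite -map_comp.
have val_rshift (s : seq 'I_b) : map val (map (@rshift a b) s) = map (addn a) (map val s).
  by rewrite -!map_comp.
apply: (inj_map val_inj); rewrite map_cat val_lshift val_rshift !val_enum_ord.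
by rewrite iotaD add0n -{2}(addn0 a) iotaDl.
Qed.

Definition block_fun a b (r1 : {perm 'I_a}) (r2 : {perm 'I_b}) (x : 'I_(a + b)) : 'I_(a + b) :=
  unsplit (match split x with inl i => inl (r1 i) | inr j => inr (r2 j) end).

Lemma block_fun_inj a b r1 r2 : injective (@block_fun a b r1 r2).
Proof.
move=> x y; rewrite /block_fun => /(can_inj unsplitK) e; apply: (can_inj splitK).
by move: e; case: (split x) => i; case: (split y) => j // [] /perm_inj ->.
Qed.

Definition block_perm a b r1 r2 : {perm 'I_(a + b)} := perm (@block_fun_inj a b r1 r2).

Lemma block_perm_lshift a b r1 r2 i : @block_perm a b r1 r2 (lshift b i) = lshift b (r1 i).
Proof. by rewrite permE /block_fun (unsplitK (inl _)). Qed.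

Lemma block_perm_rshift a b r1 r2 j : @block_perm a b r1 r2 (rshift a j) = rshift a (r2 j).
Proof. by rewrite permE /block_fun (unsplitK (inr _)). Qed.

Lemma take_word a b (p : {perm 'I_(a + b)}) :
  take a (word p) = [seq val (p (lshift b i)) | i <- enum 'I_a].
Proof.
by rewrite /word enum_ord_add map_cat take_size_cat -map_comp // size_map size_enum_ord.
Qed.

Lemma drop_word a b (p : {perm 'I_(a + b)}) :
  drop a (word p) = [seq val (p (rshift a j)) | j <- enum 'I_b].
Proof.
by rewrite /word enum_ord_add map_cat drop_size_cat -map_comp // size_map size_enum_ord.
Qed.

Section TakeDrop.
Variables (a b : nat) (P R : pred (seq nat)).
Hypotheses (P_inv : order_invariant P) (R_inv : order_invariant R).

Let N := #|[set p : {perm 'I_(a + b)} | P (take a (word p)) && R (drop a (word p))]|.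
Let NP := #|[set p : {perm 'I_a} | P (word p)]|.
Let NR := #|[set q : {perm 'I_b} | R (word q)]|.

(* Double counting over [(r1, r2, p)]: relabelling the two blocks of [p] by [r1] and [r2]
   does not change [N], and for fixed [p] it ranges over [NP * NR] good pairs. *)
Lemma card_perm_take_drop_fact : a`! * b`! * N = (a + b)`! * (NP * NR).
Proof.
pose fL (p : {perm 'I_(a + b)}) (i : 'I_a) := val (p (lshift b i)).
pose fR (p : {perm 'I_(a + b)}) (j : 'I_b) := val (p (rshift a j)).
have fL_inj p : injective (fL p) by move=> i j /val_inj /perm_inj /lshift_inj.
have fR_inj p : injective (fR p) by move=> i j /val_inj /perm_inj /rshift_inj.
have N_relabel (r1 : {perm 'I_a}) (r2 : {perm 'I_b}) :
    N = \sum_p (P [seq fL p (r1 i) | i <- enum 'I_a] * R [seq fR p (r2 j) | j <- enum 'I_b]).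
  rewrite /N -(card_preimset _ (mulgI (block_perm r1 r2))) card_set_sum.
  apply: eq_bigr => p _; rewrite inE mulnb take_word drop_word.
  by congr (P _ && R _); apply: eq_map => i; rewrite permM ?block_perm_lshift ?block_perm_rshift.
have -> : a`! * b`! * N = \sum_(r1 : {perm 'I_a}) \sum_(r2 : {perm 'I_b}) N.
  by rewrite sum_nat_const card_Sn sum_nat_const card_Sn mulnA.
under eq_bigr => r1 _ do under eq_bigr => r2 _ do rewrite (N_relabel r1 r2).
rewrite exchange_big /=; under eq_bigr => r1 _ do rewrite exchange_big /=.
rewrite exchange_big /= -card_Sn -sum_nat_const; apply: eq_bigr => p _.
rewrite /NP /NR -(card_perm_relabel (fL_inj p) P_inv) -(card_perm_relabel (fR_inj p) R_inv).
rewrite !card_set_sum big_distrl exchange_big /=; apply: eq_bigr => r1 _.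
by rewrite big_distrr.
Qed.

Lemma card_perm_take_drop : N = 'C(a + b, a) * NP * NR.
Proof.
have := card_perm_take_drop_fact; rewrite -(bin_fact (leq_addr b a)) addKn => e.
apply/eqP; rewrite -(eqn_pmul2l (_ : 0 < a`! * b`!)) ?muln_gt0 ?fact_gt0 //.
by rewrite e; apply/eqP; ring.
Qed.

End TakeDrop.

Lemma card_by_unique_witness (T : finType) (A : pred T) (S : seq nat) (P : nat -> pred T) :
  uniq S -> (forall x j j', A x -> j \in S -> j' \in S -> P j x -> P j' x -> j = j') ->
  #|[set x | A x]| = #|[set x | A x && ~~ has (fun j => P j x) S]| +
                     \sum_(j <- S) #|[set x | A x && P j x]|.
Proof.
move=> uS hP; under eq_bigr => j _ do rewrite card_set_sum.
rewrite !card_set_sum exchange_big -big_split /=; apply: eq_bigr => x _.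
case hA: (A x) => /=; last by rewrite big1.
case: hasP => [[j0 hj0 hPj0]|hn] /=.
  rewrite (bigD1_seq _ hj0 uS) /= hPj0 big1_seq // => j /andP [hj hjS].
  by case hPj: (P j x) => //; move: hj; rewrite (hP x j j0) ?eqxx.
rewrite big1_seq // => j /= hj; case hPj: (P j x) => //; case: hn; exists j => //.
Qed.

Section SpanV.
Import GRing.Theory Num.Theory.
Local Open Scope ring_scope.
Variables (k : nat) (Pi : {set {perm 'I_k}}).

Lemma eq_in_V (f g : int -> rat) : f =1 g -> in_V Pi f -> in_V Pi g.
Proof. by move=> e [s hs]; exists s => z; rewrite -e hs. Qed.

Lemma in_V_avZ (l : int) : in_V Pi (fun z => avZ Pi (z + l)).
Proof. by exists [:: (1, 0%N, l)] => z; rewrite big_seq1 /= expr0 !mul1r. Qed.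

Lemma in_V0 : in_V Pi (fun _ => 0).
Proof. by exists [::] => z; rewrite big_nil. Qed.

Lemma in_VD (f g : int -> rat) : in_V Pi f -> in_V Pi g -> in_V Pi (fun z => f z + g z).
Proof. by move=> [s hs] [t ht]; exists (s ++ t) => z; rewrite big_cat hs ht. Qed.

Lemma in_VZ (c : rat) (f : int -> rat) : in_V Pi f -> in_V Pi (fun z => c * f z).
Proof.
move=> [s hs]; exists [seq (c * t.1.1, t.1.2, t.2) | t <- s] => z.
by rewrite big_map hs mulr_sumr; apply: eq_bigr => t _ /=; rewrite !mulrA.
Qed.

Lemma in_VB (f g : int -> rat) : in_V Pi f -> in_V Pi g -> in_V Pi (fun z => f z - g z).
Proof. by move=> hf hg; apply: eq_in_V (in_VD hf (in_VZ (-1) hg)) => z; rewrite mulN1r. Qed.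

Lemma in_V_mulz (f : int -> rat) : in_V Pi f -> in_V Pi (fun z => z%:~R * f z).
Proof.
move=> [s hs]; exists [seq (t.1.1, t.1.2.+1, t.2) | t <- s] => z.
rewrite big_map hs mulr_sumr; apply: eq_bigr => t _ /=.
by rewrite exprS !mulrA [_ * t.1.1]mulrC.
Qed.

Lemma in_V_falling (m : nat) (l : int) :
  in_V Pi (fun z => (\prod_(t < m) (z%:~R - t%:R)) * avZ Pi (z + l)).
Proof.
elim: m => [|m IH]; first by apply: eq_in_V (in_V_avZ l) => z; rewrite big_ord0 mul1r.
apply: eq_in_V (in_VB (in_V_mulz IH) (in_VZ m%:R IH)) => z.
by rewrite big_ord_recr /=; ring.
Qed.

Definition eventually_in_V (T : nat) (F : nat -> nat) : Prop :=
  exists2 g, in_V Pi g & forall n, (T <= n)%N -> (F n)%:R = g (Posz n).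

Lemma eventually_in_V_le T T' F : (T <= T')%N -> eventually_in_V T F -> eventually_in_V T' F.
Proof. by move=> hT [g hg eg]; exists g => // n hn; apply: eg; apply: leq_trans hn. Qed.

Lemma eq_eventually_in_V T F G : (forall n, (T <= n)%N -> F n = G n) ->
  eventually_in_V T F -> eventually_in_V T G.
Proof. by move=> e [g hg eg]; exists g => // n hn; rewrite -e ?eg. Qed.

Lemma eventually_in_V0 T : eventually_in_V T (fun _ => 0%N).
Proof. by exists (fun _ => 0); first exact: in_V0. Qed.

Lemma eventually_in_V_av T : eventually_in_V T (av Pi).
Proof. by exists (fun z => avZ Pi (z + 0)) => [|n _]; [exact: in_V_avZ | rewrite addr0]. Qed.

Lemma eventually_in_V_add T F G :
  eventually_in_V T F -> eventually_in_V T G -> eventually_in_V T (fun n => F n + G n)%N.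
Proof.
move=> [f hf ef] [g hg eg].
by exists (fun z => f z + g z) => [|n hn]; [exact: in_VD | rewrite natrD ef ?eg].
Qed.

Lemma eventually_in_V_sum (I : eqType) (xs : seq I) (T : nat) (F : I -> nat -> nat) :
  (forall x, x \in xs -> eventually_in_V T (F x)) ->
  eventually_in_V T (fun n => \sum_(x <- xs) F x n)%N.
Proof.
elim: xs => [|x xs IH] H.
  by apply: eq_eventually_in_V (eventually_in_V0 T) => n _; rewrite big_nil.
apply: eq_eventually_in_V (eventually_in_V_add (H x (mem_head _ _)) (IH _)) => [n _|y hy].
  by rewrite big_cons.
by apply: H; rewrite inE hy orbT.
Qed.

Lemma eventually_in_V_subr T F G H : (forall n, (T <= n)%N -> F n = G n + H n)%N ->
  eventually_in_V T F -> eventually_in_V T G -> eventually_in_V T H.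
Proof.
move=> e [f hf ef] [g hg eg]; exists (fun z => f z - g z) => [|n hn]; first exact: in_VB.
by rewrite /= -ef // -eg // e // natrD addrAC subrr add0r.
Qed.

(* [C(n, m) = n^_m / m!] and [n^_m] is a polynomial in [n]. *)
Lemma eventually_in_V_binomial_av m c :
  eventually_in_V m (fun n => 'C(n, m) * c * av Pi (n - m))%N.
Proof.
exists (fun z => (c%:R / m`!%:R) * (\prod_(t < m) (z%:~R - t%:R) * avZ Pi (z - m%:Z))).
  exact/in_VZ/in_V_falling.
move=> n hmn; rewrite subzn //.
have -> : \prod_(t < m) ((Posz n)%:~R - t%:R) = (n ^_ m)%:R :> rat.
  rewrite ffact_prod natr_prod; apply: eq_bigr => t _.
  by rewrite natrB // ltnW // (leq_trans (ltn_ord t)).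
have hf : m`!%:R != 0 :> rat by rewrite pnatr_eq0 -lt0n fact_gt0.
by rewrite /= -bin_ffact !natrM; field.
Qed.

End SpanV.

Section Recursion.
Variables (k : nat) (Pi : {set {perm 'I_k}}).
Hypotheses (k_ge2 : 1 < k) (nonov : nonoverlapping Pi).
Let k_gt0 : 0 < k := ltnW k_ge2.

Definition straddle m := [seq j <- iota 1 m | m.+1 < j + k].

Lemma mem_straddle m j : (j \in straddle m) = [&& 0 < j, j <= m & m.+1 < j + k].
Proof. by rewrite mem_filter mem_iota; apply/idP/idP; lia. Qed.

Lemma exact_occ_zones m J0 J1 w : m <= size w ->
  (forall i, i \in J0 -> 0 < i /\ i + k <= m.+1) -> {subset J1 <= straddle m} ->
  exact_occ Pi (J1 ++ J0) w =
  (exact_occ Pi J0 (take m w) && exact_occ Pi [::] (drop m w)) &&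
  all (fun j => occ_seq Pi w j == (j \in J1)) (straddle m).
Proof.
move=> hm hJ0 hJ1.
have notJ0 i : m.+1 < i + k \/ i = 0 -> (i \in J0) = false.
  by move=> hi; apply/negbTE/negP => /hJ0; lia.
have notJ1 i : (i == 0) || (m < i) || (i + k <= m.+1) -> (i \in J1) = false.
  by move=> hi; apply/negbTE/negP => /hJ1; rewrite mem_straddle; lia.
have hJ0' i : i \in J0 -> i + k <= m.+1 by case/hJ0.
apply/(exact_occP Pi k_gt0)/andP => [h|[/(exact_occ_take_drop Pi k_gt0 hm hJ0') [h1 h2]]].
  split; last first.
    by apply/allP => j; rewrite mem_straddle h mem_cat => hj; rewrite notJ0 ?orbF //; lia.
  apply/(exact_occ_take_drop Pi k_gt0 hm hJ0'); split=> i hi.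
    by rewrite h mem_cat notJ1 //; lia.
  by rewrite h mem_cat notJ1 ?notJ0 //; [left | ]; lia.
move/allP => h3 i; rewrite mem_cat.
case: (posnP i) => [->|i_gt0]; first by rewrite notJ1 ?notJ0 //; right.
case: (leqP (i + k) m.+1) => hik; first by rewrite notJ1 ?h1 //; lia.
case: (leqP i m) => him; last by rewrite (negbTE (h2 _ him)) notJ1 ?notJ0 //; [left | lia].
by rewrite notJ0 ?orbF; [apply/eqP/h3; rewrite mem_straddle | left]; lia.
Qed.

Lemma straddle_occ_unique m w i j : i \in straddle m -> j \in straddle m ->
  occ_seq Pi w i -> occ_seq Pi w j -> i = j.
Proof.
rewrite !mem_straddle => hi hj oi oj.
case: (ltngtP i j) => // h.
  by have := nonoverlapping_occ_gap nonov oi oj h; lia.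
by have := nonoverlapping_occ_gap nonov oj oi h; lia.
Qed.

Lemma card_prefix_suffix m J0 n : m <= n ->
  (forall i, i \in J0 -> 0 < i /\ i + k <= m.+1) ->
  #|[set p : {perm 'I_n} |
       exact_occ Pi J0 (take m (word p)) && exact_occ Pi [::] (drop m (word p))]| =
  PiI Pi J0 n + \sum_(j <- straddle m) PiI Pi (j :: J0) n.
Proof.
move=> hmn hJ0; have hw (p : {perm 'I_n}) : m <= size (word p) by rewrite size_word.
rewrite (card_by_unique_witness (S := straddle m)
           (P := fun j (p : {perm 'I_n}) => occ_seq Pi (word p) j)); last first.
- by move=> p i j _; apply: straddle_occ_unique.
- by rewrite filter_uniq // iota_uniq.
congr (_ + _).
  rewrite PiI_word; apply: eq_card => p.
  rewrite !inE (exact_occ_zones (J1 := [::]) (hw p) hJ0) //.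
  by congr (_ && _); rewrite -all_predC; apply: eq_all => j /=; rewrite in_nil eqbF_neg.
apply: eq_big_seq => j hj; rewrite PiI_word; apply: eq_card => p.
rewrite !inE (exact_occ_zones (J1 := [:: j]) (hw p) hJ0); last by move=> i; rewrite inE => /eqP ->.
congr (_ && _); apply/idP/allP => [oj i hi | h]; last by move/eqP: (h j hj); rewrite inE eqxx.
rewrite inE; case: (eqVneq i j) => [->|ne]; first by rewrite oj.
by apply/eqP/negbTE/negP => oi; move/eqP: ne; apply; apply: straddle_occ_unique hi hj oi oj.
Qed.

Lemma PiI_recursion m J0 n : m <= n ->
  (forall i, i \in J0 -> 0 < i /\ i + k <= m.+1) ->
  'C(n, m) * PiI Pi J0 m * av Pi (n - m) =
  PiI Pi J0 n + \sum_(j <- straddle m) PiI Pi (j :: J0) n.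
Proof.
move=> hmn hJ0; rewrite -card_prefix_suffix // /av !PiI_word.
have := card_perm_take_drop m (n - m) (exact_occ_iso Pi J0) (exact_occ_iso Pi [::]).
by rewrite (subnKC hmn) => ->.
Qed.

Lemma PiI_overlap_eq0 J i j n : i \in J -> j \in J -> i < j -> j.+1 < i + k -> PiI Pi J n = 0.
Proof.
move=> hi hj hij hjk; rewrite PiI_word; apply: eq_card0 => p; rewrite inE.
apply/negP => /(exact_occP Pi k_gt0) h.
have oi : occ_seq Pi (word p) i by rewrite h.
have oj : occ_seq Pi (word p) j by rewrite h.
by have := nonoverlapping_occ_gap nonov oi oj hij; lia.
Qed.

Lemma straddleS m : straddle m.+1 = [seq j <- iota 1 m | m.+2 < j + k] ++ [:: m.+1].
Proof.
rewrite /straddle; have -> : iota 1 m.+1 = iota 1 m ++ [:: m.+1].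
  by have := iotaD 1 m 1; rewrite addn1 add1n.
by rewrite filter_cat /= ifT //; lia.
Qed.

Lemma eventually_in_V_PiI_cons M J0 :
  (forall J, all (fun i => 0 < i) J -> all (fun i => i <= M) J ->
     eventually_in_V Pi (M + k - 1) (PiI Pi J)) ->
  (forall i, i \in J0 -> 0 < i /\ i + k <= M.+2) ->
  eventually_in_V Pi (M.+1 + k - 1) (PiI Pi (M.+1 :: J0)).
Proof.
move=> IH hJ0; have hT : M + k - 1 <= M.+1 + k - 1 by lia.
set inner := [seq j <- iota 1 M | M.+2 < j + k].
apply: (eventually_in_V_subr
  (F := fun n => 'C(n, M.+1) * PiI Pi J0 M.+1 * av Pi (n - M.+1))
  (G := fun n => PiI Pi J0 n + \sum_(j <- inner) PiI Pi (j :: J0) n)).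
- move=> n hn; rewrite PiI_recursion //; last lia.
  by rewrite straddleS big_cat big_seq1 addnA.
- by apply: eventually_in_V_le (eventually_in_V_binomial_av Pi _ _); lia.
have J0_pos : all (fun i => 0 < i) J0 by apply/allP => i /hJ0 [].
have J0_le : all (fun i => i <= M) J0 by apply/allP => i /hJ0; lia.
apply: (eventually_in_V_le hT); apply: eventually_in_V_add; first exact: IH.
apply: eventually_in_V_sum => j; rewrite mem_filter mem_iota => hj.
by apply: IH; apply/andP; split => //; lia.
Qed.

End Recursion.

Lemma eventually_in_V_PiI k (Pi : {set {perm 'I_k}}) M J : 1 < k -> nonoverlapping Pi ->
  all (fun i => 0 < i) J -> all (fun i => i <= M) J ->
  eventually_in_V Pi (M + k - 1) (PiI Pi J).
Proof.
move=> k_ge2 nonov; have k_gt0 := ltnW k_ge2.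
elim: M J => [|M IH] J /allP J_pos /allP J_le.
  apply: eq_eventually_in_V (eventually_in_V_av Pi _) => n _.
  apply: eq_PiI => // i; rewrite in_nil; apply/esym/negP => hi.
  by have := J_pos i hi; have := J_le i hi; lia.
have J_ltM i : i \in J -> i != M.+1 -> i <= M.
  by move=> hi; have := J_le i hi; rewrite leq_eqVlt ltnS => /orP [/eqP ->|]; rewrite ?eqxx.
case: (boolP (M.+1 \in J)) => hM; last first.
  apply: (eventually_in_V_le _ (IH J _ _)); [lia | exact/allP |].
  by apply/allP => i hi; apply: (J_ltM _ hi); apply/eqP => e; move: hM; rewrite -e hi.
case: (boolP (has (fun i => (i != M.+1) && (M.+2 < i + k)) J)).
  case/hasP => i hi /andP [ne hik].
  apply: eq_eventually_in_V (eventually_in_V0 Pi _) => n _.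
  by rewrite (PiI_overlap_eq0 k_ge2 nonov _ hi hM) //; have := J_ltM i hi ne; lia.
move/hasPn => far; set J0 := [seq i <- J | i + k <= M.+2].
apply: eq_eventually_in_V (eventually_in_V_PiI_cons k_ge2 nonov IH (J0 := J0) _) => [n _|i].
  apply: eq_PiI => // i; rewrite inE mem_filter.
  case: (eqVneq i M.+1) => [->|ne] //=; case hi: (i \in J); rewrite ?andbF //= andbT.
  by have := far i hi; rewrite ne /=; lia.
by rewrite mem_filter => /andP [hik hi]; split => //; apply: J_pos.
Qed.

Theorem theorem6p1 (k : nat) (Pi : {set {perm 'I_k}}) (I : seq nat) :
  2 <= k ->
  nonoverlapping Pi ->
  all (fun i => 0 < i) I ->
  let m := \max_(i <- I) i in
  exists g : int -> rat,
    in_V Pi g /\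
    forall n : nat, m + k - 1 <= n -> ((PiI Pi I n)%:R = g (Posz n))%R.
Proof.
move=> k_ge2 nonov I_pos m.
have I_le : all (fun i => i <= m) I.
  by apply/allP => i hi; apply: (@leq_bigmax_seq _ I predT id i hi).
have [g hg eg] := eventually_in_V_PiI k_ge2 nonov I_pos I_le.
by exists g.
Qed.
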